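(* The canonical model $\mathcal{M}_c=(W_c,\leq_c,R_c,V^+_c,V^-_c)$ is a Nelsonian conditional model: $W_c\neq\emptyset$, $\leq_c$ is a preorder, $R_c$ is well defined (independent of the representative formula), and $R_c$ satisfies conditions (c1) and (c2).
   Context: $\mathcal{L}_{\Box\!\!\rightarrow}$ is built from propositional variables with $\wedge,\vee,\to$, strong negation $\sim$, and a binary would-conditional $\Box\!\!\rightarrow$; $\phi\Diamond\!\!\rightarrow\psi$ abbreviates $\sim(\phi\Box\!\!\rightarrow\sim\psi)$. Abbreviations: $\leftrightarrow$ is mutual $\to$; $\phi\Rightarrow\psi:=(\phi\to\psi)\wedge(\sim\psi\to\sim\phi)$; $\phi\Leftrightarrow\psi:=(\phi\Rightarrow\psi)\wedge(\psi\Rightarrow\phi)$. $\mathbb{N}4\mathbb{CK}$: modus ponens; positive intuitionistic schemes; $\sim\sim\phi\leftrightarrow\phi$, $\sim(\phi\wedge\psi)\leftrightarrow(\sim\phi\vee\sim\psi)$, $\sim(\phi\vee\psi)\leftrightarrow(\sim\phi\wedge\sim\psi)$, $\sim(\phi\to\psi)\leftrightarrow(\phi\wedge\sim\psi)$; (A1) $((\phi\Box\!\!\rightarrow\psi)\wedge(\phi\Box\!\!\rightarrow\chi))\Leftrightarrow(\phi\Box\!\!\rightarrow(\psi\wedge\chi))$; (A2) $(\sim(\phi\Box\!\!\rightarrow\psi)\wedge(\phi\Box\!\!\rightarrow\chi))\to\sim(\phi\Box\!\!\rightarrow(\psi\vee\sim\chi))$; (A3) $((\phi\Diamond\!\!\rightarrow\psi)\to(\phi\Box\!\!\rightarrow\chi))\to(\phi\Box\!\!\rightarrow(\psi\to\chi))$;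 (A4) $\phi\Box\!\!\rightarrow(\psi\to\psi)$; rules: from $\phi\Leftrightarrow\psi$ infer $(\phi\Box\!\!\rightarrow\chi)\Leftrightarrow(\psi\Box\!\!\rightarrow\chi)$; from $\phi\leftrightarrow\psi$ infer $(\chi\Box\!\!\rightarrow\phi)\leftrightarrow(\chi\Box\!\!\rightarrow\psi)$; from $\sim\phi\leftrightarrow\sim\psi$ infer $\sim(\chi\Box\!\!\rightarrow\phi)\leftrightarrow\sim(\chi\Box\!\!\rightarrow\psi)$. $\Gamma\vdash\Delta$ means some nonempty finite disjunction of members of $\Delta$ is derivable from $\Gamma$ and theorems by modus ponens. A bi-set $(\Gamma,\Delta)$ is maximal iff $\Gamma\not\vdash\Delta$ and $\Gamma\cup\Delta=\mathcal{L}_{\Box\!\!\rightarrow}$. Canonical model: $W_c$ is the set of maximal bi-sets; $(\Gamma_0,\Delta_0)\leq_c(\Gamma_1,\Delta_1)$ iff $\Gamma_0\subseteq\Gamma_1$; $((\Gamma_0,\Delta_0),(X,Y),(\Gamma_1,\Delta_1))\in R_c$ iff there is $\phi$ with $X=\{(\Gamma,\Delta)\in W_c\mid\phi\in\Gamma\}$, $Y=\{(\Gamma,\Delta)\in W_c\mid\sim\phi\in\Gamma\}$, $\{\psi\mid\phi\Box\!\!\rightarrow\psi\in\Gamma_0\}\subseteq\Gamma_1$, and $\{\sim(\phi\Box\!\!\rightarrow\psi)\mid\sim\psi\in\Gamma_1\}\subseteq\Gamma_0$; $V^+_c(p)=\{(\Gamma,\Delta)\in W_c\mid p\in\Gamma\}$,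 $V^-_c(p)=\{(\Gamma,\Delta)\in W_c\mid\sim p\in\Gamma\}$. A Nelsonian conditional model is $(W,\leq,R,V^+,V^-)$ with $W\neq\emptyset$, $\leq$ a preorder, $V^\pm$ assigning upward-closed sets, $R\subseteq W\times(\mathcal{P}(W)\times\mathcal{P}(W))\times W$ satisfying for all $X,Y$: (c1) $w\leq w'$ and $R_{(X,Y)}(w,v)$ imply $R_{(X,Y)}(w',v')$ for some $v'\geq v$; (c2) $R_{(X,Y)}(w,v)$ and $v\leq v'$ imply $R_{(X,Y)}(w',v')$ for some $w'\geq w$. *)

From Stdlib Require Import List RelationClasses.
Import ListNotations.

Inductive form : Type :=
| Var  : nat -> form
| And  : form -> form -> form
| Or   : form -> form -> form
| Imp  : form -> form -> form
| Neg  : form -> form            (* strong negation ~ *)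
| Cond : form -> form -> form.

Definition Might (a b : form) : form := Neg (Cond a (Neg b)).
Definition Iff (a b : form) : form := And (Imp a b) (Imp b a).
Definition SImp (a b : form) : form := And (Imp a b) (Imp (Neg b) (Neg a)).
Definition SIff (a b : form) : form := And (SImp a b) (SImp b a).

Inductive thm : form -> Prop :=
| ax_K  : forall a b, thm (Imp a (Imp b a))
| ax_S  : forall a b c, thm (Imp (Imp a (Imp b c)) (Imp (Imp a b) (Imp a c)))
| ax_AndE1 : forall a b, thm (Imp (And a b) a)
| ax_AndE2 : forall a b, thm (Imp (And a b) b)
| ax_AndI  : forall a b, thm (Imp a (Imp b (And a b)))
| ax_OrI1  : forall a b, thm (Imp a (Or a b))
| ax_OrI2  : forall a b, thm (Imp b (Or a b))
| ax_OrE   : forall a b c, thm (Imp (Imp a c) (Imp (Imp b c) (Imp (Or a b) c)))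
| ax_NN   : forall a, thm (Iff (Neg (Neg a)) a)
| ax_NAnd : forall a b, thm (Iff (Neg (And a b)) (Or (Neg a) (Neg b)))
| ax_NOr  : forall a b, thm (Iff (Neg (Or a b)) (And (Neg a) (Neg b)))
| ax_NImp : forall a b, thm (Iff (Neg (Imp a b)) (And a (Neg b)))
| ax_A1 : forall a b c,
    thm (SIff (And (Cond a b) (Cond a c)) (Cond a (And b c)))
| ax_A2 : forall a b c,
    thm (Imp (And (Neg (Cond a b)) (Cond a c)) (Neg (Cond a (Or b (Neg c)))))
| ax_A3 : forall a b c,
    thm (Imp (Imp (Might a b) (Cond a c)) (Cond a (Imp b c)))
| ax_A4 : forall a b, thm (Cond a (Imp b b))
| r_MP : forall a b, thm (Imp a b) -> thm a -> thm b
| r_RA : forall a b c, thm (SIff a b) -> thm (SIff (Cond a c) (Cond b c))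
| r_RC : forall a b c, thm (Iff a b) -> thm (Iff (Cond c a) (Cond c b))
| r_RCN : forall a b c, thm (Iff (Neg a) (Neg b)) ->
    thm (Iff (Neg (Cond c a)) (Neg (Cond c b))).

Inductive deriv (Gam : form -> Prop) : form -> Prop :=
| d_hyp : forall a, Gam a -> deriv Gam a
| d_thm : forall a, thm a -> deriv Gam a
| d_MP  : forall a b, deriv Gam (Imp a b) -> deriv Gam a -> deriv Gam b.

Fixpoint bigOr (a : form) (l : list form) : form :=
  match l with
  | [] => a
  | b :: l' => Or a (bigOr b l')
  end.

Definition bderiv (Gam Del : form -> Prop) : Prop :=
  exists a l, Del a /\ Forall Del l /\ deriv Gam (bigOr a l).

Definition maximal (Gam Del : form -> Prop) : Prop :=
  ~ bderiv Gam Del /\ (forall a, Gam a \/ Del a).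

Record mbs : Type := MBS {
  mG : form -> Prop;
  mD : form -> Prop;
  mmax : maximal mG mD }.

Definition Wc : Type := mbs.

Definition lec (w v : Wc) : Prop := forall a, mG w a -> mG v a.

Definition Rcond (phi : form) (w v : Wc) : Prop :=
  (forall psi, mG w (Cond phi psi) -> mG v psi) /\
  (forall psi, mG v (Neg psi) -> mG w (Neg (Cond phi psi))).

Definition Rc (w : Wc) (XY : (Wc -> Prop) * (Wc -> Prop)) (v : Wc) : Prop :=
  exists phi,
    fst XY = (fun u : Wc => mG u phi) /\
    snd XY = (fun u : Wc => mG u (Neg phi)) /\
    Rcond phi w v.

Definition Vpc (p : nat) (w : Wc) : Prop := mG w (Var p).
Definition Vmc (p : nat) (w : Wc) : Prop := mG w (Neg (Var p)).

Definition Rc_well_defined : Prop :=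
  forall phi phi' : form,
    (fun u : Wc => mG u phi) = (fun u : Wc => mG u phi') ->
    (fun u : Wc => mG u (Neg phi)) = (fun u : Wc => mG u (Neg phi')) ->
    forall w v : Wc, Rcond phi w v <-> Rcond phi' w v.

Definition upward_closed {W : Type} (le : W -> W -> Prop) (A : W -> Prop) : Prop :=
  forall w w', le w w' -> A w -> A w'.

Definition nelsonian_model (W : Type) (le : W -> W -> Prop)
  (R : W -> (W -> Prop) * (W -> Prop) -> W -> Prop)
  (Vp Vm : nat -> W -> Prop) : Prop :=
  inhabited W /\
  PreOrder le /\
  (forall p, upward_closed le (Vp p)) /\
  (forall p, upward_closed le (Vm p)) /\
  (* (c1) *)
  (forall XY w w' v, le w w' -> R w XY v -> exists v', le v v' /\ R w' XY v') /\
  (* (c2) *)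
  (forall XY w v v', R w XY v -> le v v' -> exists w', le w w' /\ R w' XY v').

From Stdlib Require Import List RelationClasses Classical Lia Cantor.
Import ListNotations.

(** Everything rests on the Lindenbaum lemma: enumerating all formulas and putting each
    on the left unless that makes the bi-set derive its right side (the cut rule then
    guarantees the right side is safe), every bi-set with Γ ⊬ Δ extends to a maximal one.
    Hence an implication holding in all maximal bi-sets is a theorem, so two formulas with
    the same positive and negative extensions are strongly equivalent, and rule RA makes
    R_c independent of the representative φ.
    For (c1) one extends (v ∪ {ψ | φ□→ψ ∈ w'}, {∼ψ | ∼(φ□→ψ) ∉ w'}) and for (c2)
    (w ∪ {∼(φ□→ψ) | ∼ψ ∈ v'}, {φ□→ψ | ψ ∉ v'}). In both, the right side is closed under
    provable upper bounds (via A1 and primeness), so an inconsistency yields a single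
    derivation; by compactness the extra hypotheses become antecedents, which A2 (for c1)
    and A3 (for c2) move inside the conditional, contradicting R_c(w, v). *)

Definition extend (G : form -> Prop) (a : form) : form -> Prop := fun x => G x \/ x = a.
Definition no_hyp : form -> Prop := fun _ => False.

Lemma deriv_mono G G' a : (forall x, G x -> G' x) -> deriv G a -> deriv G' a.
Proof. intros HG D; induction D; [apply d_hyp, HG | apply d_thm | eapply d_MP]; eauto. Qed.

Lemma thm_imp_refl a : thm (Imp a a).
Proof. exact (r_MP _ _ (r_MP _ _ (ax_S a (Imp a a) a) (ax_K a (Imp a a))) (ax_K a a)). Qed.

Lemma deduction G a b : deriv (extend G a) b -> deriv G (Imp a b).
Proof.
  induction 1 as [x [Hx | ->] | x Hx | x y _ IH1 _ IH2].
  - eapply d_MP; [apply d_thm, ax_K | apply d_hyp, Hx].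
  - apply d_thm, thm_imp_refl.
  - eapply d_MP; [apply d_thm, ax_K | apply d_thm, Hx].
  - eapply d_MP; [eapply d_MP; [apply d_thm, ax_S | exact IH1] | exact IH2].
Qed.

Lemma thm_of_deriv a : deriv no_hyp a -> thm a.
Proof. induction 1; [contradiction | assumption | eapply r_MP; eassumption]. Qed.

Lemma thm_imp_of_deriv a b : deriv (extend no_hyp a) b -> thm (Imp a b).
Proof. intro D; apply thm_of_deriv, deduction, D. Qed.

Section DerivedRules.

Variable G : form -> Prop.

Lemma deriv_added a : deriv (extend G a) a.
Proof. apply d_hyp; right; reflexivity. Qed.

Lemma deriv_weaken a b : deriv G b -> deriv (extend G a) b.
Proof. apply deriv_mono; intros x Hx; left; exact Hx. Qed.

Lemma deriv_thm_mp a b : thm (Imp a b) -> deriv G a -> deriv G b.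
Proof. intros H; apply d_MP, d_thm, H. Qed.

Lemma deriv_andI a b : deriv G a -> deriv G b -> deriv G (And a b).
Proof. intros Ha Hb; eapply d_MP; [eapply deriv_thm_mp; [apply ax_AndI | exact Ha] | exact Hb]. Qed.

Lemma deriv_andE1 a b : deriv G (And a b) -> deriv G a.
Proof. apply deriv_thm_mp, ax_AndE1. Qed.

Lemma deriv_andE2 a b : deriv G (And a b) -> deriv G b.
Proof. apply deriv_thm_mp, ax_AndE2. Qed.

Lemma deriv_orI1 a b : deriv G a -> deriv G (Or a b).
Proof. apply deriv_thm_mp, ax_OrI1. Qed.

Lemma deriv_orI2 a b : deriv G b -> deriv G (Or a b).
Proof. apply deriv_thm_mp, ax_OrI2. Qed.

Lemma deriv_orE a b c :
  deriv G (Or a b) -> deriv (extend G a) c -> deriv (extend G b) c -> deriv G c.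
Proof.
  intros H Ha Hb; eapply d_MP; [|exact H].
  eapply d_MP; [eapply deriv_thm_mp; [apply ax_OrE | apply deduction, Ha] | apply deduction, Hb].
Qed.

Lemma deriv_iffl a b : thm (Iff a b) -> deriv G a -> deriv G b.
Proof. intros H; apply d_MP, deriv_andE1 with (Imp b a), d_thm, H. Qed.

Lemma deriv_iffr a b : thm (Iff a b) -> deriv G b -> deriv G a.
Proof. intros H; apply d_MP, deriv_andE2 with (Imp a b), d_thm, H. Qed.

Lemma deriv_nnE a : deriv G (Neg (Neg a)) -> deriv G a.
Proof. apply deriv_iffl, ax_NN. Qed.

Lemma deriv_nnI a : deriv G a -> deriv G (Neg (Neg a)).
Proof. apply deriv_iffr, ax_NN. Qed.

Lemma deriv_nandE a b : deriv G (Neg (And a b)) -> deriv G (Or (Neg a) (Neg b)).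
Proof. apply deriv_iffl, ax_NAnd. Qed.

Lemma deriv_nandI a b : deriv G (Or (Neg a) (Neg b)) -> deriv G (Neg (And a b)).
Proof. apply deriv_iffr, ax_NAnd. Qed.

Lemma deriv_norE a b : deriv G (Neg (Or a b)) -> deriv G (And (Neg a) (Neg b)).
Proof. apply deriv_iffl, ax_NOr. Qed.

End DerivedRules.

Lemma thm_and a b : thm a -> thm b -> thm (And a b).
Proof. intros Ha Hb; apply thm_of_deriv, deriv_andI; apply d_thm; assumption. Qed.

Lemma thm_imp_trans a b c : thm (Imp a b) -> thm (Imp b c) -> thm (Imp a c).
Proof.
  intros Hab Hbc; apply thm_imp_of_deriv.
  eapply deriv_thm_mp; [exact Hbc | eapply deriv_thm_mp; [exact Hab | apply deriv_added]].
Qed.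

Lemma thm_SIff_inv a b : thm (SIff a b) ->
  thm (Imp a b) /\ thm (Imp b a) /\ thm (Imp (Neg b) (Neg a)) /\ thm (Imp (Neg a) (Neg b)).
Proof.
  unfold SIff, SImp; intro H; repeat split; apply thm_of_deriv;
    [apply deriv_andE1 with (Imp (Neg b) (Neg a)), deriv_andE1 with (SImp b a)
    |apply deriv_andE1 with (Imp (Neg a) (Neg b)), deriv_andE2 with (SImp a b)
    |apply deriv_andE2 with (Imp a b), deriv_andE1 with (SImp b a)
    |apply deriv_andE2 with (Imp b a), deriv_andE2 with (SImp a b)];
    apply d_thm, H.
Qed.

Lemma thm_SIff a b : thm (Imp a b) -> thm (Imp b a) ->
  thm (Imp (Neg b) (Neg a)) -> thm (Imp (Neg a) (Neg b)) -> thm (SIff a b).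
Proof. intros; unfold SIff, SImp; repeat apply thm_and; assumption. Qed.

Lemma cond_mono a b b' : thm (Imp b b') -> thm (Imp (Cond a b) (Cond a b')).
Proof.
  intro H; apply thm_imp_of_deriv.
  destruct (thm_SIff_inv _ _ (ax_A1 a b b')) as (_ & A1_split & _ & _).
  assert (Hconj : thm (Iff b (And b b'))).
  { apply thm_and; apply thm_imp_of_deriv.
    - apply deriv_andI; [apply deriv_added | eapply deriv_thm_mp; [exact H | apply deriv_added]].
    - eapply deriv_andE1, deriv_added. }
  eapply deriv_andE2, deriv_thm_mp; [exact A1_split |].
  eapply deriv_iffl; [exact (r_RC _ _ a Hconj) | apply deriv_added].
Qed.

Lemma neg_cond_mono a b b' :
  thm (Imp (Neg b) (Neg b')) -> thm (Imp (Neg (Cond a b)) (Neg (Cond a b'))).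
Proof.
  intro H; apply thm_imp_of_deriv.
  destruct (thm_SIff_inv _ _ (ax_A1 a b b')) as (_ & _ & _ & A1_neg).
  assert (Hconj : thm (Iff (Neg (And b b')) (Neg b'))).
  { apply thm_and; apply thm_imp_of_deriv.
    - eapply deriv_orE; [apply deriv_nandE, deriv_added | | apply deriv_added].
      eapply deriv_thm_mp; [exact H | apply deriv_added].
    - apply deriv_nandI, deriv_orI2, deriv_added. }
  eapply deriv_iffl; [exact (r_RCN _ _ a Hconj) |].
  eapply deriv_thm_mp; [exact A1_neg | apply deriv_nandI, deriv_orI1, deriv_added].
Qed.

Lemma neg_cond_and a b c :
  thm (Imp (Neg (Cond a (And b c))) (Or (Neg (Cond a b)) (Neg (Cond a c)))).
Proof.
  destruct (thm_SIff_inv _ _ (ax_A1 a b c)) as (_ & _ & A1_neg & _).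
  apply thm_imp_of_deriv, deriv_nandE.
  eapply deriv_thm_mp; [exact A1_neg | apply deriv_added].
Qed.

Lemma deriv_neg_cond_mp G a b c :
  deriv G (Neg (Cond a (Neg (Imp b c)))) -> deriv G (Cond a b) -> deriv G (Neg (Cond a (Neg c))).
Proof.
  intros Hn Hb.
  assert (A2 : deriv G (Neg (Cond a (Or (Neg (Imp b c)) (Neg b))))).
  { eapply deriv_thm_mp; [apply ax_A2 | apply deriv_andI; assumption]. }
  eapply deriv_thm_mp; [apply neg_cond_mono | exact A2].
  apply thm_imp_of_deriv, deriv_nnI.
  pose proof (deriv_norE _ _ _ (deriv_added no_hyp (Neg (Or (Neg (Imp b c)) (Neg b))))) as Hnn.
  eapply d_MP; apply deriv_nnE; [eapply deriv_andE1 | eapply deriv_andE2]; exact Hnn.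
Qed.

Lemma deriv_neg_cond_mps G a lb c :
  Forall (fun b => deriv G (Cond a b)) lb ->
  deriv G (Neg (Cond a (Neg (fold_right Imp c lb)))) -> deriv G (Neg (Cond a (Neg c))).
Proof.
  induction 1 as [| b lb Hb _ IH]; simpl; intro Hn; [exact Hn |].
  apply IH; eapply deriv_neg_cond_mp; eassumption.
Qed.

Lemma deriv_cond_neg_intro G a b c :
  deriv G (Imp (Neg (Cond a b)) (Cond a c)) -> deriv G (Cond a (Imp (Neg b) c)).
Proof.
  intro H; eapply d_MP; [apply d_thm, ax_A3 |]; unfold Might.
  apply deduction; eapply d_MP; [apply deriv_weaken, H |].
  eapply deriv_thm_mp; [apply neg_cond_mono, thm_imp_of_deriv | apply deriv_added].
  apply deriv_nnE, deriv_added.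
Qed.

Lemma deriv_cond_neg_intros G a lb c :
  deriv G (fold_right Imp (Cond a c) (map (fun b => Neg (Cond a b)) lb)) ->
  deriv G (Cond a (fold_right Imp c (map Neg lb))).
Proof.
  revert G; induction lb as [| b lb IH]; simpl; intros G H; [exact H |].
  apply deriv_cond_neg_intro, deduction, IH.
  eapply d_MP; [apply deriv_weaken, H | apply deriv_added].
Qed.

(** * Finite disjunctions and compactness *)

Lemma deriv_bigOr_intro G a l x : In x (a :: l) -> deriv G x -> deriv G (bigOr a l).
Proof.
  revert a; induction l as [| b l IH]; intros a [-> | Hin] D; simpl in *;
    [exact D | contradiction | apply deriv_orI1, D | apply deriv_orI2, (IH b Hin D)].
Qed.

Lemma deriv_bigOr_elim G a l c : deriv G (bigOr a l) ->
  (forall x, In x (a :: l) -> deriv (extend G x) c) -> deriv G c.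
Proof.
  revert G a; induction l as [| b l IH]; intros G a D H; simpl in *.
  - eapply d_MP; [apply deduction, H; left |]; auto.
  - eapply deriv_orE; [exact D | apply H; left; reflexivity |].
    apply (IH _ b); [apply deriv_added |]; intros x Hx.
    eapply deriv_mono; [| apply (H x); right; exact Hx].
    unfold extend; tauto.
Qed.

Lemma deriv_bigOr_incl G a l b m :
  incl (a :: l) (b :: m) -> deriv G (bigOr a l) -> deriv G (bigOr b m).
Proof.
  intros Hincl D; apply (deriv_bigOr_elim _ _ _ _ D); intros x Hx.
  apply (deriv_bigOr_intro _ _ _ x); [apply Hincl, Hx | apply deriv_added].
Qed.

Lemma bderiv_mono G G' D D' : (forall x, G x -> G' x) -> (forall x, D x -> D' x) ->
  bderiv G D -> bderiv G' D'.
Proof.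
  intros HG HD (a & l & Ha & Hl & Hd); exists a, l; repeat split;
    [apply HD, Ha | eapply Forall_impl; eassumption | eapply deriv_mono; eassumption].
Qed.

Lemma bderiv_directed G D :
  (forall a b, D a -> D b -> exists c, D c /\ thm (Imp a c) /\ thm (Imp b c)) ->
  bderiv G D -> exists c, D c /\ deriv G c.
Proof.
  intros Hdir (a & l & Ha & Hl & Hd).
  assert (Hub : exists c, D c /\ forall x, In x (a :: l) -> thm (Imp x c)).
  { clear Hd; revert a Ha; induction Hl as [| b l Hb _ IH]; intros a Ha.
    - exists a; split; [exact Ha |]; intros x [-> | []]; apply thm_imp_refl.
    - destruct (IH b Hb) as (c' & Dc' & Hc').
      destruct (Hdir a c' Ha Dc') as (c & Dc & Hac & Hc'c).
      exists c; split; [exact Dc |]; intros x [-> | Hin]; [exact Hac |].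
      eapply thm_imp_trans; [apply Hc', Hin | exact Hc'c]. }
  destruct Hub as (c & Dc & Hc); exists c; split; [exact Dc |].
  apply (deriv_bigOr_elim _ _ _ _ Hd); intros x Hin.
  eapply deriv_thm_mp; [apply Hc, Hin | apply deriv_added].
Qed.

Lemma form_eq_dec (a b : form) : {a = b} + {a <> b}.
Proof. decide equality; apply PeanoNat.Nat.eq_dec. Qed.

Lemma bderiv_cut G D a : bderiv (extend G a) D -> bderiv G (extend D a) -> bderiv G D.
Proof.
  intros (d1 & l1 & Hd1 & Hl1 & D1) (d2 & l2 & Hd2 & Hl2 & D2).
  set (l' := filter (fun x => if form_eq_dec x a then false else true) (d2 :: l2)).
  assert (Hl' : forall x, In x l' -> In x (d2 :: l2) /\ x <> a).
  { intros x Hx; apply filter_In in Hx as [Hin Hne].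
    destruct (form_eq_dec x a); [discriminate | split; assumption]. }
  exists d1, (l1 ++ l'); split; [exact Hd1 | split].
  - apply Forall_app; split; [exact Hl1 |]; apply Forall_forall; intros x Hx.
    destruct (Hl' x Hx) as [Hin Hne].
    assert (HD : Forall (extend D a) (d2 :: l2)) by (constructor; assumption).
    rewrite Forall_forall in HD; destruct (HD x Hin); [assumption | contradiction].
  - apply (deriv_bigOr_elim _ _ _ _ D2); intros x Hx.
    destruct (form_eq_dec x a) as [-> | Hne].
    + eapply deriv_bigOr_incl; [| exact D1].
      intros y [-> | Hy]; [left; reflexivity | right; apply in_or_app; left; exact Hy].
    + apply (deriv_bigOr_intro _ _ _ x); [| apply deriv_added].
      right; apply in_or_app; right; apply filter_In; split; [exact Hx |].
      destruct (form_eq_dec x a); [contradiction | reflexivity].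
Qed.

Lemma deriv_compact G c : deriv G c -> exists l, Forall G l /\ deriv (fun x => In x l) c.
Proof.
  induction 1 as [a Ha | a Ha | a b _ (l1 & F1 & D1) _ (l2 & F2 & D2)].
  - exists [a]; split; [constructor; [exact Ha | constructor] | apply d_hyp; left; reflexivity].
  - exists []; split; [constructor | apply d_thm, Ha].
  - exists (l1 ++ l2); split; [apply Forall_app; split; assumption |].
    eapply d_MP; eapply deriv_mono; try eassumption; intros; apply in_or_app; auto.
Qed.

Lemma deriv_union_split (P Q : form -> Prop) c : deriv (fun x => P x \/ Q x) c ->
  exists lq, Forall Q lq /\ deriv P (fold_right Imp c lq).
Proof.
  intro D; destruct (deriv_compact _ _ D) as (l & Fl & Dl); clear D.
  assert (Dl' : deriv (fun x => P x \/ In x l) c) by (eapply deriv_mono; [| exact Dl]; auto).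
  clear Dl; revert c Dl'; induction Fl as [| x l [Hx | Hx] _ IH]; intros c Dl.
  - exists []; split; [constructor |]; simpl.
    eapply deriv_mono; [| exact Dl]; intros y [Hy | []]; exact Hy.
  - apply IH; eapply deriv_mono; [| exact Dl]; intros y [Hy | [-> | Hy]]; auto.
  - assert (Dx : deriv (fun y => P y \/ In y l) (Imp x c)).
    { apply deduction; eapply deriv_mono; [| exact Dl].
      intros y [Hy | [-> | Hy]]; unfold extend; auto. }
    destruct (IH _ Dx) as (lq & Fq & Dq); exists (lq ++ [x]); split.
    + apply Forall_app; split; [exact Fq | constructor; [exact Hx | constructor]].
    + rewrite fold_right_app; exact Dq.
Qed.

Lemma Forall_image_inv {A B : Type} (f : A -> B) (P : A -> Prop) l :
  Forall (fun y => exists x, y = f x /\ P x) l -> exists xs, l = map f xs /\ Forall P xs.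
Proof.
  induction 1 as [| y l (x & -> & Hx) _ (xs & -> & Hxs)];
    [exists [] | exists (x :: xs)]; split; auto.
Qed.

Lemma mbs_closed (w : mbs) a : deriv (mG w) a -> mG w a.
Proof.
  intro D; destruct (mmax w) as [Hcons Htot]; destruct (Htot a) as [H | H]; [exact H |].
  exfalso; apply Hcons; exists a, []; repeat split; [exact H | constructor | exact D].
Qed.

Lemma mbs_thm_mp (w : mbs) a b : thm (Imp a b) -> mG w a -> mG w b.
Proof. intros H Ha; apply mbs_closed; eapply deriv_thm_mp; [exact H | apply d_hyp, Ha]. Qed.

Lemma mbs_mp (w : mbs) a b : mG w (Imp a b) -> mG w a -> mG w b.
Proof. intros; apply mbs_closed; eapply d_MP; apply d_hyp; eassumption. Qed.

Lemma mbs_disjoint (w : mbs) a : mG w a -> mD w a -> False.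
Proof.
  intros HG HD; destruct (mmax w) as [Hcons _]; apply Hcons.
  exists a, []; repeat split; [exact HD | constructor | apply d_hyp, HG].
Qed.

Lemma mbs_prime (w : mbs) a b : mG w (Or a b) -> mG w a \/ mG w b.
Proof.
  intro H; destruct (mmax w) as [Hcons Htot].
  destruct (Htot a) as [Ha | Ha]; [left; exact Ha |].
  destruct (Htot b) as [Hb | Hb]; [right; exact Hb |].
  exfalso; apply Hcons; exists a, [b]; repeat split;
    [exact Ha | repeat constructor; exact Hb | apply d_hyp, H].
Qed.

(** * The Lindenbaum lemma *)

Fixpoint forms_upto (n : nat) : list form :=
  match n with
  | 0 => [Var 0]
  | S n => Var (S n) :: forms_upto n ++ map Neg (forms_upto n) ++
      flat_map (fun x => flat_map (fun y => [And x y; Or x y; Imp x y; Cond x y])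
                                  (forms_upto n)) (forms_upto n)
  end.

Lemma forms_upto_mono m n f : m <= n -> In f (forms_upto m) -> In f (forms_upto n).
Proof. induction 1; [auto | intro; right; apply in_or_app; left; auto]. Qed.

Lemma forms_upto_bin n x y : In x (forms_upto n) -> In y (forms_upto n) ->
  forall z, In z [And x y; Or x y; Imp x y; Cond x y] -> In z (forms_upto (S n)).
Proof.
  intros Hx Hy z Hz; right; apply in_or_app; right; apply in_or_app; right.
  apply in_flat_map; exists x; split; [exact Hx |].
  apply in_flat_map; exists y; split; [exact Hy | exact Hz].
Qed.

Lemma forms_upto_complete f : exists n, In f (forms_upto n).
Proof.
  induction f as [k | x [n1 H1] y [n2 H2] | x [n1 H1] y [n2 H2] | x [n1 H1] y [n2 H2]
                 | x [n H] | x [n1 H1] y [n2 H2]];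
    try (exists (S (Nat.max n1 n2)); apply (forms_upto_bin (Nat.max n1 n2) x y);
         [eapply forms_upto_mono; [| exact H1]; lia
         |eapply forms_upto_mono; [| exact H2]; lia
         |simpl; tauto]).
  - exists k; destruct k; simpl; auto.
  - exists (S n); right; apply in_or_app; right; apply in_or_app; left; apply in_map, H.
Qed.

Definition form_at (n : nat) : form :=
  let (i, j) := Cantor.of_nat n in nth j (forms_upto i) (Var 0).

Lemma form_at_surj f : exists n, form_at n = f.
Proof.
  destruct (forms_upto_complete f) as [i Hi].
  destruct (In_nth _ _ (Var 0) Hi) as (j & _ & Hj).
  exists (Cantor.to_nat (i, j)); unfold form_at; rewrite Cantor.cancel_of_to; exact Hj.
Qed.

Definition biset : Type := ((form -> Prop) * (form -> Prop))%type.

Definition consistent (s : biset) : Prop := ~ bderiv (fst s) (snd s).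

Definition sub_biset (s s' : biset) : Prop :=
  (forall x, fst s x -> fst s' x) /\ (forall x, snd s x -> snd s' x).

Definition place (s : biset) (a : form) : biset :=
  (fun x => fst s x \/ (x = a /\ ~ bderiv (extend (fst s) a) (snd s)),
   fun x => snd s x \/ (x = a /\ bderiv (extend (fst s) a) (snd s))).

Fixpoint stage (s : biset) (n : nat) : biset :=
  match n with
  | 0 => s
  | S n => place (stage s n) (form_at n)
  end.

Lemma place_sub s a : sub_biset s (place s a).
Proof. split; simpl; auto. Qed.

Lemma place_decides s a : fst (place s a) a \/ snd (place s a) a.
Proof. simpl; destruct (classic (bderiv (extend (fst s) a) (snd s))); auto. Qed.

Lemma place_consistent s a : consistent s -> consistent (place s a).
Proof.
  unfold consistent; simpl; intros Hc B'.
  destruct (classic (bderiv (extend (fst s) a) (snd s))) as [B | B].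
  - apply Hc, (bderiv_cut _ _ a B).
    eapply bderiv_mono; [| | exact B']; unfold extend; intros x Hx; tauto.
  - apply B; eapply bderiv_mono; [| | exact B']; unfold extend; intros x Hx; tauto.
Qed.

Lemma stage_mono s m n : m <= n -> sub_biset (stage s m) (stage s n).
Proof.
  induction 1 as [| n _ [IH1 IH2]]; [split; auto |].
  destruct (place_sub (stage s n) (form_at n)) as [P1 P2]; split; simpl; auto.
Qed.

Lemma stage_consistent s n : consistent s -> consistent (stage s n).
Proof. intro Hc; induction n; simpl; [exact Hc | apply place_consistent, IHn]. Qed.

Lemma Forall_chain {A : Type} (F : nat -> A -> Prop) l :
  (forall m n x, m <= n -> F m x -> F n x) ->
  Forall (fun x => exists n, F n x) l -> exists n, Forall (F n) l.
Proof.
  intro Hmono; induction 1 as [| x l [n Hx] _ [n' Hl]]; [exists 0; constructor |].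
  exists (Nat.max n n'); constructor.
  - eapply Hmono; [| exact Hx]; lia.
  - eapply Forall_impl; [| exact Hl]; intro y; apply Hmono; lia.
Qed.

Lemma lindenbaum G D : ~ bderiv G D ->
  exists w : mbs, (forall x, G x -> mG w x) /\ (forall x, D x -> mD w x).
Proof.
  intro Hc; set (s := (G, D) : biset).
  set (Gw := fun x => exists n, fst (stage s n) x).
  set (Dw := fun x => exists n, snd (stage s n) x).
  assert (Hmax : maximal Gw Dw).
  { split.
    - intros (a & l & Ha & Hl & Hd).
      destruct (deriv_compact _ _ Hd) as (lg & Fg & Dg).
      destruct (Forall_chain (fun n => fst (stage s n)) lg) as [n1 F1];
        [intros m n x Hmn; apply (stage_mono s m n Hmn) | exact Fg |].
      destruct (Forall_chain (fun n => snd (stage s n)) (a :: l)) as [n2 F2];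
        [intros m n x Hmn; apply (stage_mono s m n Hmn) | constructor; assumption |].
      destruct (stage_mono s n1 (Nat.max n1 n2) ltac:(lia)) as [M1 _].
      destruct (stage_mono s n2 (Nat.max n1 n2) ltac:(lia)) as [_ M2].
      apply (stage_consistent s (Nat.max n1 n2) Hc).
      inversion F2 as [| ? ? Ha' Hl']; subst; exists a, l; repeat split.
      + apply M2, Ha'.
      + eapply Forall_impl; [exact M2 | exact Hl'].
      + eapply deriv_mono; [| exact Dg]; intros x Hx.
        apply M1; rewrite Forall_forall in F1; apply F1, Hx.
    - intro a; destruct (form_at_surj a) as [n <-].
      destruct (place_decides (stage s n) (form_at n)); [left | right]; exists (S n); assumption. }
  exists (MBS Gw Dw Hmax); split; intros x Hx; exists 0; exact Hx.
Qed.

(** * The canonical model *)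

Lemma thm_imp_of_mbs a b : (forall w : mbs, mG w a -> mG w b) -> thm (Imp a b).
Proof.
  intro H; apply NNPP; intro Hn.
  destruct (lindenbaum (fun x => x = a) (fun x => x = b)) as (w & Hwa & Hwb).
  - intro B; apply Hn.
    apply bderiv_directed in B as (c & -> & Dc);
      [| intros c1 c2 -> ->; exists b; repeat split; apply thm_imp_refl].
    apply thm_imp_of_deriv; eapply deriv_mono; [| exact Dc]; intros x ->; right; reflexivity.
  - apply (mbs_disjoint w b); [apply H, Hwa | apply Hwb]; reflexivity.
Qed.

Lemma Rcond_transfer phi phi' (w v : Wc) :
  (forall psi, thm (Imp (Cond phi' psi) (Cond phi psi))) ->
  (forall psi, thm (Imp (Neg (Cond phi psi)) (Neg (Cond phi' psi)))) ->
  Rcond phi w v -> Rcond phi' w v.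
Proof.
  intros Hpos Hneg [Hforth Hback]; split; intros psi Hpsi.
  - apply Hforth; eapply mbs_thm_mp; [apply Hpos | exact Hpsi].
  - eapply mbs_thm_mp; [apply Hneg | apply Hback, Hpsi].
Qed.

Lemma Rc_well_defined_holds : Rc_well_defined.
Proof.
  intros phi phi' E1 E2.
  assert (S1 : forall w : Wc, mG w phi = mG w phi') by (intro w; exact (f_equal (fun P => P w) E1)).
  assert (S2 : forall w : Wc, mG w (Neg phi) = mG w (Neg phi')) by (intro w; exact (f_equal (fun P => P w) E2)).
  assert (HS : thm (SIff phi phi')).
  { apply thm_SIff; apply thm_imp_of_mbs; intro w; rewrite ?S1, ?S2; exact id. }
  intros w v; split; apply Rcond_transfer; intro psi;
    destruct (thm_SIff_inv _ _ (r_RA _ _ psi HS)) as (? & ? & ? & ?); assumption.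
Qed.

Lemma c1_seed_consistent phi (w w' v : Wc) : lec w w' -> Rcond phi w v ->
  ~ bderiv (fun x => mG v x \/ mG w' (Cond phi x))
           (fun x => exists psi, x = Neg psi /\ ~ mG w' (Neg (Cond phi psi))).
Proof.
  intros Hww [_ Hback] B.
  apply bderiv_directed in B as (c & (psi & -> & Hpsi) & Dc).
  - apply Hpsi; destruct (deriv_union_split _ _ _ Dc) as (lq & Fq & Dq).
    apply mbs_closed, (mbs_thm_mp _ _ _ (thm_imp_of_deriv _ _ (deriv_nnI _ _ (deriv_added _ _)))),
      Hback, Hww in Dq.
    apply mbs_closed; eapply deriv_thm_mp;
      [apply neg_cond_mono, thm_imp_of_deriv, deriv_nnE, deriv_added |].
    apply (deriv_neg_cond_mps _ _ lq); [| apply d_hyp, Dq].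
    eapply Forall_impl; [| exact Fq]; intros x Hx; apply d_hyp, Hx.
  - intros a b (p1 & -> & H1) (p2 & -> & H2); exists (Neg (And p1 p2)); split.
    + exists (And p1 p2); split; [reflexivity |]; intro H.
      apply (mbs_thm_mp _ _ _ (neg_cond_and _ _ _)), mbs_prime in H as [H | H]; contradiction.
    + split; apply thm_imp_of_deriv, deriv_nandI; [apply deriv_orI1 | apply deriv_orI2];
        apply deriv_added.
Qed.

Lemma Rcond_c1 phi (w w' v : Wc) : lec w w' -> Rcond phi w v ->
  exists v', lec v v' /\ Rcond phi w' v'.
Proof.
  intros Hww Hr; destruct (lindenbaum _ _ (c1_seed_consistent phi w w' v Hww Hr)) as (v' & HG & HD).
  exists v'; split; [intros x Hx; apply HG; left; exact Hx | split].
  - intros psi Hpsi; apply HG; right; exact Hpsi.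
  - intros psi Hpsi; apply NNPP; intro Hn.
    apply (mbs_disjoint v' (Neg psi) Hpsi), HD; exists psi; split; [reflexivity | exact Hn].
Qed.

Lemma c2_seed_consistent phi (w v v' : Wc) : Rcond phi w v -> lec v v' ->
  ~ bderiv (fun x => mG w x \/ exists psi, x = Neg (Cond phi psi) /\ mG v' (Neg psi))
           (fun x => exists psi, x = Cond phi psi /\ ~ mG v' psi).
Proof.
  intros [Hforth _] Hvv B.
  apply bderiv_directed in B as (c & (chi & -> & Hchi) & Dc).
  - apply Hchi; destruct (deriv_union_split _ _ _ Dc) as (lq & Fq & Dq).
    destruct (Forall_image_inv (fun psi => Neg (Cond phi psi)) (fun psi => mG v' (Neg psi)) lq Fq)
      as (ks & -> & Fk).
    apply deriv_cond_neg_intros, mbs_closed, Hforth, Hvv in Dq.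
    clear - Fk Dq; induction Fk as [| psi ks Hpsi _ IH]; simpl in Dq;
      [exact Dq | apply IH, (mbs_mp _ _ _ Dq Hpsi)].
  - intros a b (p1 & -> & H1) (p2 & -> & H2); exists (Cond phi (Or p1 p2)); split.
    + exists (Or p1 p2); split; [reflexivity |]; intro H.
      apply mbs_prime in H as [H | H]; contradiction.
    + split; apply cond_mono, thm_imp_of_deriv; [apply deriv_orI1 | apply deriv_orI2];
        apply deriv_added.
Qed.

Lemma Rcond_c2 phi (w v v' : Wc) : Rcond phi w v -> lec v v' ->
  exists w', lec w w' /\ Rcond phi w' v'.
Proof.
  intros Hr Hvv; destruct (lindenbaum _ _ (c2_seed_consistent phi w v v' Hr Hvv)) as (w' & HG & HD).
  exists w'; split; [intros x Hx; apply HG; left; exact Hx | split].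
  - intros psi Hpsi; apply NNPP; intro Hn.
    apply (mbs_disjoint w' (Cond phi psi) Hpsi), HD; exists psi; split; [reflexivity | exact Hn].
  - intros psi Hpsi; apply HG; right; exists psi; split; [reflexivity | exact Hpsi].
Qed.

Lemma Wc_inhabited : inhabited Wc.
Proof.
  assert (Hmax : maximal (fun _ => True) (fun _ => False)).
  { split; [intros (a & _ & [] & _) | intro; left; exact I]. }
  exact (inhabits (MBS _ _ Hmax)).
Qed.

Lemma lec_preorder : PreOrder lec.
Proof. split; [intros w a Ha; exact Ha | intros u v w Huv Hvw a Ha; apply Hvw, Huv, Ha]. Qed.

Theorem lemma10 : nelsonian_model Wc lec Rc Vpc Vmc /\ Rc_well_defined.
Proof.
  split; [| exact Rc_well_defined_holds].
  split; [exact Wc_inhabited |]; split; [exact lec_preorder |].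
  split; [intros p w w' Hww; apply Hww |]; split; [intros p w w' Hww; apply Hww |].
  split.
  - intros XY w w' v Hww (phi & E1 & E2 & Hr).
    destruct (Rcond_c1 phi w w' v Hww Hr) as (v' & Hvv & Hr').
    exists v'; split; [exact Hvv | exists phi; auto].
  - intros XY w v v' (phi & E1 & E2 & Hr) Hvv.
    destruct (Rcond_c2 phi w v v' Hr Hvv) as (w' & Hww & Hr').
    exists w'; split; [exact Hww | exists phi; auto].
Qed.
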